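(* Let $n$ be an integer and let $\omega\in\mathbb C$ be a root of $\Delta_n=S_n'S_{n-1}-S_nS_{n-1}'$. If $n>0$ then $|h_n(\omega)|>1$, and if $n<0$ then $|h_n(\omega)|<1$, where $h_n=S_n/S_{n-1}$.
   Context: The Chebyshev polynomials $S_j(\omega)$ are defined for all integers $j$ by $S_0=1$, $S_1=\omega$, $S_{j+1}=\omega S_j-S_{j-1}$; primes denote derivatives with respect to $\omega$. *)

From HB Require Import structures.
From mathcomp Require Import all_boot all_order all_algebra.
From mathcomp Require Export complex.
From mathcomp Require Export reals.
Set Implicit Arguments. Unset Strict Implicit. Unset Printing Implicit Defensive.
Import Order.TTheory GRing.Theory Num.Theory.
Local Open Scope ring_scope.

Section Cheb.
Variable C : numClosedFieldType.

Fixpoint Spos (k : nat) : {poly C} :=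
  match k with
  | 0 => 1
  | 1 => 'X
  | (m.+1 as k1).+1 => 'X * Spos k1 - Spos m
  end.

(* Backward recurrence S_{j-1} = w S_j - S_{j+1}: Sneg k = S_{-k}. *)
Fixpoint Sneg (k : nat) : {poly C} :=
  match k with
  | 0 => 1
  | 1 => 0
  | (m.+1 as k1).+1 => 'X * Sneg k1 - Sneg m
  end.

Definition Scheb (j : int) : {poly C} :=
  match j with
  | Posz k => Spos k
  | Negz k => Sneg k.+1   (* Negz k = -(k+1) *)
  end.

Definition Delta (n : int) : {poly C} :=
  (Scheb n)^`() * Scheb (n - 1) - Scheb n * (Scheb (n - 1))^`().

Definition hfun (n : int) (w : C) : C := (Scheb n).[w] / (Scheb (n - 1)).[w].
End Cheb.
Arguments Scheb {C} j.
Arguments Delta {C} n.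
Arguments hfun {C} n w.

From HB Require Import structures.
From mathcomp Require Import all_boot all_order all_algebra.
From mathcomp Require Import complex reals.
From mathcomp Require Import ring zify.
Import Order.TTheory GRing.Theory Num.Theory.
Local Open Scope ring_scope.

(* Write w = q + q^-1 with q != 0.  Then (q - q^-1) S_j(w) = q^(j+1) - q^-(j+1),
   and for n > 0 one has Delta_n = S_0^2 + ... + S_(n-1)^2, so Delta_n(w) = 0
   becomes Q - Q^-1 = (2n+1)(q - q^-1) with Q = q^(2n+1); the degenerate case
   q = +-1 is excluded because then S_i(w)^2 = (i+1)^2.  With rho = |q|^2,
     rho^(n+1) |q - q^-1|^2 (|S_n(w)|^2 - |S_(n-1)(w)|^2)
       = (rho - 1)(rho^(2n+1) - 1) - (q - conj q)(Q - conj Q),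
   where the first term is nonnegative, the root equation makes the second one
   nonnegative, and one of them is positive.  Negative indices reduce to positive
   ones through S_(-j) = - S_(j-2), which gives h_n = 1 / h_(-n-1). *)


Lemma subr1_mul_exprS_subr1_gt0 (R : numDomainType) (x : R) m :
  0 <= x -> x != 1 -> 0 < (x - 1) * (x ^+ m.+1 - 1).
Proof.
move=> x_ge0 x_neq1; have x_real : x \is Num.real by exact: ger0_real.
case: (real_ltgtP x_real (real1 R)) => [x_lt1|x_gt1|x_eq1].
- by rewrite nmulr_rgt0 ?subr_lt0 ?exprn_ilt1.
- by rewrite pmulr_rgt0 ?subr_gt0 ?exprn_egt1.
- by rewrite x_eq1 eqxx in x_neq1.
Qed.

Section Chebyshev.
Set Implicit Arguments.
Unset Strict Implicit.
Variable C : numClosedFieldType.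

Lemma Spos_SS k : Spos C k.+2 = 'X * Spos C k.+1 - Spos C k.
Proof. by []. Qed.

Lemma horner_Spos_SS (w : C) k :
  (Spos C k.+2).[w] = w * (Spos C k.+1).[w] - (Spos C k).[w].
Proof. by rewrite /= hornerD hornerN hornerM hornerX. Qed.

Lemma Sneg_SS k : Sneg C k.+2 = - Spos C k.
Proof.
suff [] : Sneg C k.+2 = - Spos C k /\ Sneg C k.+3 = - Spos C k.+1 by [].
elim: k => [|k [IHk IHk1]]; first by rewrite /= mulr0 sub0r mulrN1 subr0.
split=> //; rewrite [Sneg C _]/= -/(Sneg C k.+3) -/(Sneg C k.+2) IHk IHk1 Spos_SS.
ring.
Qed.

Lemma Delta_Posz k : Delta (Posz k) = \sum_(i < k) Spos C i ^+ 2.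
Proof.
case: k => [|k]; first by rewrite big_ord0 /Delta /= deriv0 !mulr0 subr0.
have -> : Delta (Posz k.+1)
    = (Spos C k.+1)^`() * Spos C k - Spos C k.+1 * (Spos C k)^`().
  by rewrite /Delta; have -> : Posz k.+1 - 1 = Posz k by lia.
elim: k => [|k IHk].
  by rewrite big_ord1 /= derivX -polyC1 derivC mulr1 mulr0 subr0 expr1n.
rewrite big_ord_recr -IHk Spos_SS derivB derivM derivX.
(* [/=] exposes the [+] hidden in the monoid law of [big_ord_recr]; the [set]s
   keep it from unfolding [Spos]. *)
set s1 := Spos C k.+1; set s0 := Spos C k; rewrite /=; ring.
Qed.

Lemma Delta_Negz k : Delta (Negz k.+1) = - Delta (Posz k.+1) :> {poly C}.
Proof.
rewrite /Delta; have -> : Negz k.+1 - 1 = Negz k.+2 by lia.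
have -> : Posz k.+1 - 1 = Posz k by lia.
rewrite /Scheb !Sneg_SS !derivN; ring.
Qed.

Lemma hfun_Negz0 (w : C) : hfun (Negz 0) w = 0.
Proof. by rewrite /hfun /= horner0 mul0r. Qed.

Lemma hfun_Negz k (w : C) : hfun (Negz k.+1) w = (hfun (Posz k.+1) w)^-1.
Proof.
rewrite /hfun; have -> : Negz k.+1 - 1 = Negz k.+2 by lia.
have -> : Posz k.+1 - 1 = Posz k by lia.
by rewrite /Scheb !Sneg_SS !hornerN invrN mulrNN invf_div.
Qed.

Lemma exists_joukowski (w : C) : exists2 q : C, q != 0 & w = q + q^-1.
Proof.
pose r := sqrtC (w ^+ 2 - 4); pose q := (w + r) / 2.
have r2 : r ^+ 2 = w ^+ 2 - 4 by rewrite sqrtCK.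
have q_root : q ^+ 2 - w * q + 1 = 0.
  have -> : q ^+ 2 - w * q + 1 = (r ^+ 2 - (w ^+ 2 - 4)) / 4 by rewrite /q; field.
  by rewrite r2 subrr mul0r.
have q_neq0 : q != 0.
  apply/eqP => q0; move: q_root; rewrite q0 expr0n mulr0 subrr add0r.
  by move/eqP; rewrite oner_eq0.
exists q => //; apply: (mulIf q_neq0).
rewrite mulrDl mulVf // -expr2; apply/eqP.
by rewrite -subr_eq0 -oppr_eq0 -q_root; apply/eqP; ring.
Qed.

Definition qdiff (q : C) (j : nat) : C := q ^+ j - q ^- j.

Lemma qdiff_Spos (q : C) i : q != 0 ->
  (q - q^-1) * (Spos C i).[q + q^-1] = qdiff q i.+1.
Proof.
move=> q_neq0.
suff [] : (q - q^-1) * (Spos C i).[q + q^-1] = qdiff q i.+1 /\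
          (q - q^-1) * (Spos C i.+1).[q + q^-1] = qdiff q i.+2 by [].
elim: i => [|i [IHi IHi1]].
  by rewrite /qdiff /= hornerC hornerX !exprS !expr0 !mulr1; split; field.
split=> //; rewrite horner_Spos_SS.
have -> : forall a b : C, (q - q^-1) * ((q + q^-1) * a - b)
    = (q + q^-1) * ((q - q^-1) * a) - (q - q^-1) * b by move=> a b; ring.
rewrite IHi IHi1 /qdiff !exprS.
have qi_neq0 : q ^+ i != 0 by rewrite expf_neq0.
by field; apply/andP.
Qed.

Lemma qdiff_sqr_sum (q : C) M : q != 0 ->
  (q - q^-1) * \sum_(i < M) qdiff q i.+1 ^+ 2
    = qdiff q (M + M).+1 - (M + M).+1%:R * (q - q^-1).
Proof.
move=> q_neq0; elim: M => [|M IHM].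
  by rewrite big_ord0 mulr0 /qdiff expr1 mul1r subrr.
rewrite big_ord_recr /= mulrDr IHM /qdiff addSn addnS.
have -> : (M + M).+3%:R = (M + M).+1%:R + 2 :> C by rewrite -natrD addn2.
rewrite !exprS exprD.
have qM_neq0 : q ^+ M != 0 by rewrite expf_neq0.
by field; apply/andP.
Qed.

Lemma Spos_horner_sqr1 (q : C) i : q ^+ 2 = 1 ->
  (Spos C i).[q + q^-1] = i.+1%:R * q ^+ i.
Proof.
move=> q2; have q_neq0 : q != 0.
  by apply/eqP => q0; move: q2; rewrite q0 expr0n => /eqP; rewrite eq_sym oner_eq0.
have q_inv : q^-1 = q by rewrite -[q^-1]mul1r -q2 expr2 mulfK.
rewrite q_inv.
suff [] : (Spos C i).[q + q] = i.+1%:R * q ^+ i /\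
          (Spos C i.+1).[q + q] = i.+2%:R * q ^+ i.+1 by [].
elim: i => [|i [IHi IHi1]].
  by rewrite /= hornerC hornerX expr0 expr1 mulr1 mulr_natl mulr2n.
split=> //; rewrite horner_Spos_SS IHi IHi1 !exprS; apply/eqP; rewrite -subr_eq0.
suff -> : (q + q) * (i.+2%:R * (q * q ^+ i)) - i.+1%:R * q ^+ i
          - i.+3%:R * (q * (q * q ^+ i)) = i.+1%:R * q ^+ i * (q ^+ 2 - 1).
  by rewrite q2 subrr mulr0.
by rewrite expr2; ring.
Qed.

Lemma qdiff_normS_sub (q : C) j : q != 0 ->
  (q * q^*) ^+ j.+1 * (`|qdiff q j.+1| ^+ 2 - `|qdiff q j| ^+ 2)
  = (q * q^* - 1) * ((q * q^*) ^+ (j + j).+1 - 1)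
    - (q - q^*) * (q ^+ (j + j).+1 - (q ^+ (j + j).+1)^*).
Proof.
move=> q_neq0; have qc_neq0 : q^* != 0 by rewrite conjC_eq0.
rewrite !normCK /qdiff !rmorphB !fmorphV !rmorphXn !exprMn !exprS !exprD.
have qj_neq0 : q ^+ j != 0 by rewrite expf_neq0.
have qcj_neq0 : q^* ^+ j != 0 by rewrite expf_neq0.
by field; rewrite q_neq0 qc_neq0 qj_neq0 qcj_neq0.
Qed.

(* The left-hand side is 4 Im(q) Im(Q), so Q - Q^-1 = m (q - q^-1) forces Im(q)
   and Im(Q) to have the same sign. *)
Lemma sub_conj_mul_sub_conj (q Q : C) (m : nat) : q != 0 -> Q != 0 ->
  Q - Q^-1 = m%:R * (q - q^-1) ->
  - ((q - q^*) * (Q - Q^*))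
    = m%:R * `|q - q^*| ^+ 2 * (1 + (q * q^*)^-1) / (1 + (Q * Q^*)^-1).
Proof.
move=> q_neq0 Q_neq0 E.
have qc_neq0 : q^* != 0 by rewrite conjC_eq0.
have Qc_neq0 : Q^* != 0 by rewrite conjC_eq0.
have Ec : Q^* - Q^*^-1 = m%:R * (q^* - q^*^-1).
  by rewrite -fmorphV -rmorphB E rmorphM rmorphB fmorphV rmorph_nat.
have den_neq0 : 1 + (Q * Q^*)^-1 != 0.
  by rewrite gt_eqF // addr_gt0 // invr_gt0 -normCK exprn_gt0 // normr_gt0.
have E_diff : (Q - Q^*) * (1 + (Q * Q^*)^-1) = m%:R * (q - q^*) * (1 + (q * q^*)^-1).
  transitivity ((Q - Q^-1) - (Q^* - Q^*^-1)); first by field; apply/andP.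
  by rewrite E Ec; field; apply/andP.
have -> : Q - Q^* = m%:R * (q - q^*) * (1 + (q * q^*)^-1) / (1 + (Q * Q^*)^-1).
  by rewrite -E_diff mulfK.
by rewrite normCK rmorphB /= conjCK; ring.
Qed.

Lemma qdiff_neq0 (q : C) n : q != 0 -> q - q^-1 != 0 -> (0 < n)%N ->
  qdiff q (n + n).+1 = (n + n).+1%:R * (q - q^-1) -> qdiff q n != 0.
Proof.
move=> q_neq0 c_neq0 n_gt0 E; apply/eqP; rewrite /qdiff => /eqP; rewrite subr_eq0.
move/eqP=> qn; have q2n : q ^+ (n + n) = 1 by rewrite exprD {1}qn mulVf // expf_neq0.
move: E; rewrite /qdiff exprS q2n mulr1 => E.
have : (n + n)%:R * (q - q^-1) == 0.
  by apply/eqP; rewrite -[RHS](subrr (q - q^-1)) {2}E; ring.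
by rewrite mulf_eq0 (negPf c_neq0) orbF pnatr_eq0 addn_eq0 andbb (gtn_eqF n_gt0).
Qed.

Lemma qdiff_norm_ltS (q : C) n : q != 0 -> q - q^-1 != 0 ->
  qdiff q (n + n).+1 = (n + n).+1%:R * (q - q^-1) ->
  `|qdiff q n| < `|qdiff q n.+1|.
Proof.
move=> q_neq0 c_neq0 E.
have rho_gt0 : 0 < q * q^* by rewrite -normCK exprn_gt0 // normr_gt0.
have Q_neq0 : q ^+ (n + n).+1 != 0 by rewrite expf_neq0.
have cross := sub_conj_mul_sub_conj q_neq0 Q_neq0 E.
have cross_ge0 : 0 <= - ((q - q^*) * (q ^+ (n + n).+1 - (q ^+ (n + n).+1)^*)).
  rewrite cross divr_ge0 ?mulr_ge0 ?ler0n ?exprn_ge0 //.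
    by rewrite addr_ge0 // invr_ge0 ltW.
  by rewrite addr_ge0 // invr_ge0 -normCK exprn_ge0.
rewrite -(ltr_pXn2r (isT : 0 < 2)%N) ?nnegrE // -subr_gt0.
rewrite -(pmulr_rgt0 _ (exprn_gt0 n.+1 rho_gt0)).
rewrite qdiff_normS_sub //.
have [rho1|rho_neq1] := eqVneq (q * q^*) 1; last first.
  by apply: ltr_wpDr; rewrite // subr1_mul_exprS_subr1_gt0 // ltW.
have q_nonreal : q - q^* != 0.
  apply: contraNneq c_neq0 => /subr0_eq q_real.
  by rewrite -[q^-1]mul1r -rho1 -q_real mulfK // subrr.
rewrite rho1 subrr mul0r add0r cross.
rewrite divr_gt0 ?mulr_gt0 ?addr_gt0 ?invr_gt0 ?ltr0n ?exprn_gt0 ?normr_gt0 //.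
by rewrite -normCK exprn_gt0 // normr_gt0.
Qed.

Lemma sum_sqr_Spos_sqr1 (q : C) k : q ^+ 2 = 1 ->
  \sum_(i < k) (Spos C i).[q + q^-1] ^+ 2 = (\sum_(i < k) i.+1 ^ 2)%:R.
Proof.
move=> q2; rewrite natr_sum; apply: eq_bigr => i _.
by rewrite Spos_horner_sqr1 // exprMn -exprM mulnC exprM q2 expr1n mulr1 natrX.
Qed.

Lemma norm_hfun_Posz_gt1 N (w : C) :
  root (Delta (Posz N.+1)) w -> 1 < `|hfun (Posz N.+1) w|.
Proof.
rewrite Delta_Posz => /rootP; rewrite horner_sum.
under eq_bigr do rewrite horner_exp.
have [q q_neq0 -> sum0] := exists_joukowski w.
have c_neq0 : q - q^-1 != 0.
  apply/eqP => /subr0_eq q_inv; move: sum0.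
  rewrite sum_sqr_Spos_sqr1; last by rewrite expr2 {2}q_inv mulfV.
  by move/eqP; rewrite pnatr_eq0 big_ord_recl.
have E : qdiff q (N.+1 + N.+1).+1 = (N.+1 + N.+1).+1%:R * (q - q^-1).
  apply/eqP; rewrite -subr_eq0 -qdiff_sqr_sum //.
  under eq_bigr => i _ do rewrite -qdiff_Spos // exprMn.
  by rewrite -mulr_sumr sum0 !mulr0.
have lt_qdiff := qdiff_norm_ltS q_neq0 c_neq0 E.
rewrite -!qdiff_Spos // !normrM ltr_pM2l ?normr_gt0 // in lt_qdiff.
have := qdiff_neq0 q_neq0 c_neq0 (ltn0Sn N) E.
rewrite -qdiff_Spos // mulf_eq0 negb_or => /andP[_ S_neq0].
rewrite /hfun; have -> : Posz N.+1 - 1 = Posz N by lia.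
by rewrite normrM normfV ltr_pdivlMr ?normr_gt0 // mul1r.
Qed.

End Chebyshev.

Theorem lemma5p4 (R : realType) (n : int) (w : R[i]) :
  root (Delta n) w ->
  ((0 < n)%R -> 1 < `|hfun n w|) /\ (n < 0 -> `|hfun n w| < 1).
Proof.
case: n => [[|N]|[|K]] root_w; split=> // _.
- exact: norm_hfun_Posz_gt1.
- by rewrite hfun_Negz0 normr0 ltr01.
have gt1 : 1 < `|hfun (Posz K.+1) w|.
  by apply: norm_hfun_Posz_gt1; rewrite -rootN -Delta_Negz.
by rewrite hfun_Negz normfV invf_lt1 // (lt_trans ltr01 gt1).
Qed.
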